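(* Assume $\gamma=0$ and that $r$ is not a root of unity. Let $I$ be a two-sided ideal of $L$, $x\in I$, and $x=\sum_{i\in\mathbb Z}x_i$ ($x_i\in L_i$) its homogeneous decomposition, with length $\ell(x)=\#\{i: x_i\neq0\}\ge1$. Then $x_ih^{\ell(x)-1}\in I$ for all $i\in\mathbb Z$.
   Context: Let $r,s\in\mathbb C^\times$ and $\phi\in\mathbb C[x]$; $L=L(\phi,r,s,0)$ is the associative $\mathbb C$-algebra generated by $u,d,h$ subject to $hu=ruh$, $dh=rhd$, $du-sud=\phi(h)$. $L$ is $\mathbb Z$-graded by $\deg u=1,\deg d=-1,\deg h=0$, and $L_i$ is the degree-$i$ component (so $hx_i=r^ix_ih$ for $x_i\in L_i$). *)

From HB Require Import structures.
From mathcomp Require Import all_boot all_order all_algebra.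
Set Implicit Arguments. Unset Strict Implicit. Unset Printing Implicit Defensive.
Import Order.TTheory GRing.Theory Num.Theory.
Local Open Scope ring_scope.

Inductive letter := LU | LD | LH.

Definition letter_eqb (a b : letter) : bool :=
  match a, b with LU, LU | LD, LD | LH, LH => true | _, _ => false end.
Lemma letter_eqP : Equality.axiom letter_eqb.
Proof. by case; case; constructor. Qed.
HB.instance Definition _ := hasDecEq.Build letter letter_eqP.

Definition gen (A : nzRingType) (u d h : A) (c : letter) : A :=
  match c with LU => u | LD => d | LH => h end.

Definition word_eval (A : nzRingType) (u d h : A) (w : seq letter) : A :=
  \prod_(c <- w) gen u d h c.

Definition word_deg (w : seq letter) : int :=
  (count (pred1 LU) w)%:Z - (count (pred1 LD) w)%:Z.

Definition poly_at (K : fieldType) (A : algType K) (phi : {poly K}) (a : A) : A :=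
  \sum_(i < size phi) phi`_i *: a ^+ i.

(* The defining relations of L(phi, r, s, 0). *)
Definition down_up_rel (K : fieldType) (A : algType K) (phi : {poly K}) (r s : K)
  (u d h : A) : Prop :=
  [/\ h * u = r *: (u * h), d * h = r *: (h * d)
    & d * u - s *: (u * d) = poly_at phi h].

Definition is_alg_hom (K : fieldType) (A B : algType K) (f : A -> B) : Prop :=
  [/\ forall a b, f (a + b) = f a + f b,
      forall a b, f (a * b) = f a * f b,
      f 1 = 1
    & forall (k : K) a, f (k *: a) = k *: f a].

(* (A, u, d, h) is the algebra presented by generators u, d, h and the
   relations of L(phi, r, s, 0): it satisfies the relations and is initial
   (universal) among K-algebras with three elements satisfying them. *)
Definition is_down_up_algebra (K : fieldType) (A : algType K) (phi : {poly K})
  (r s : K) (u d h : A) : Prop :=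
  down_up_rel phi r s u d h /\
  forall (B : algType K) (u' d' h' : B), down_up_rel phi r s u' d' h' ->
    exists f : A -> B,
      [/\ is_alg_hom f, f u = u', f d = d', f h = h'
        & forall g : A -> B, is_alg_hom g -> g u = u' -> g d = d' -> g h = h' ->
            forall a, g a = f a].

Definition homog (K : fieldType) (A : algType K) (u d h : A) (i : int) (x : A) : Prop :=
  exists s : seq (K * seq letter),
    all (fun p => word_deg p.2 == i) s /\
    x = \sum_(p <- s) p.1 *: word_eval u d h p.2.

Definition twosided_ideal (R : nzRingType) (I : {pred R}) : Prop :=
  [/\ 0 \in I, forall x y, x \in I -> y \in I -> x + y \in I
    & forall a b x, x \in I -> a * x * b \in I].

From HB Require Import structures.
From mathcomp Require Import all_boot all_order all_algebra.
Import GRing.Theory.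
Set Implicit Arguments. Unset Strict Implicit. Unset Printing Implicit Defensive.
Local Open Scope ring_scope.

(* Every homogeneous y of degree k satisfies h y = r^k y h.  If x = x_1 + ... + x_l
   lies in I with components of pairwise distinct degrees k_1, ..., k_l, then
   h x - r^(k_l) x h = sum_(m < l) (r^(k_m) - r^(k_l)) x_m h lies in I, has one
   component fewer, and its components are still homogeneous of the same degrees.
   After l - 1 such steps only a multiple of x_i h^(l-1) remains, and each scalar
   r^(k_i) - r^(k_m) picked up on the way is invertible because r is not a root
   of unity. *)

Lemma expfz_inj (K : fieldType) (r : K) : r != 0 ->
  (forall n : nat, (0 < n)%N -> r ^+ n != 1) -> injective (fun i : int => r ^ i).
Proof.
move=> r0 r_nonroot i j /= eq_rij; apply/eqP; rewrite -subr_eq0; apply/negPn/negP.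
have rij1 : r ^ (i - j) = 1.
  apply: (@mulfI _ (r ^ j)); first by rewrite expfz_eq0 negb_and r0 orbT.
  by rewrite -expfzDr // addrC subrK eq_rij mulr1.
move: rij1; case: (i - j) => [[|n]|n] //= rn1 _.
  by move: rn1; apply/eqP; apply: r_nonroot.
move: rn1; rewrite NegzE -exprz_inv -exprnP exprVn => /eqP.
by rewrite invr_eq1; apply/negP; apply: r_nonroot.
Qed.

Definition twisted {K : fieldType} {A : algType K} (h : A) (r : K) (k : int) (y : A) :=
  h * y = r ^ k *: (y * h).

Section Twisted.
Variables (K : fieldType) (A : algType K) (h : A) (r : K).

Lemma twistedZ (k : int) (c : K) (y : A) : twisted h r k y -> twisted h r k (c *: y).
Proof. by rewrite /twisted => twy; rewrite -scalerAr -scalerAl twy !scalerA mulrC. Qed.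

Lemma twistedMh (k : int) (y : A) : twisted h r k y -> twisted h r k (y * h).
Proof. by rewrite /twisted => twy; rewrite mulrA twy -scalerAl. Qed.

Lemma twisted_sum (k : int) (T : eqType) (s : seq T) (F : T -> A) :
  (forall t, t \in s -> twisted h r k (F t)) -> twisted h r k (\sum_(t <- s) F t).
Proof.
move=> twF; rewrite /twisted mulr_sumr mulr_suml scaler_sumr big_seq [RHS]big_seq.
by apply: eq_bigr => t /twF.
Qed.

End Twisted.

Section DownUpWords.
Variables (K : fieldType) (A : algType K) (r : K) (u d h : A).
Hypotheses (r_neq0 : r != 0) (hu : h * u = r *: (u * h)) (dh : d * h = r *: (h * d)).

Definition letter_deg (c : letter) : int := match c with LU => 1 | LD => -1 | LH => 0 end.

Lemma word_deg_cons c w : word_deg (c :: w) = letter_deg c + word_deg w.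
Proof.
rewrite /word_deg /=; case: c => /=; rewrite ?add0n ?add1n ?add0r //.
  by rewrite -addn1 PoszD addrAC addrC.
by rewrite -addn1 PoszD opprD addrA addrC.
Qed.

Lemma gen_twisted c : twisted h r (letter_deg c) (gen u d h c).
Proof.
rewrite /twisted; case: c => /=; rewrite ?expr1z ?expr0z ?scale1r //.
by rewrite dh scalerA exprN1 mulVf // scale1r.
Qed.

Lemma word_eval_twisted w : twisted h r (word_deg w) (word_eval u d h w).
Proof.
elim: w => [|c w IH].
  by rewrite /twisted /word_eval big_nil mul1r mulr1 expr0z scale1r.
rewrite /twisted /word_eval big_cons -/(word_eval u d h w) word_deg_cons expfzDr //.
rewrite mulrA gen_twisted -scalerAl -mulrA IH -scalerAr scalerA.
by rewrite mulrA.
Qed.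

Lemma homog_twisted i y : homog u d h i y -> twisted h r i y.
Proof.
case=> ws [deg_ws ->]; apply: twisted_sum => p /(allP deg_ws) /eqP <-.
exact/twistedZ/word_eval_twisted.
Qed.

End DownUpWords.

Section TwistedIdeal.
Variables (K : fieldType) (A : algType K) (I : {pred A}).
Hypothesis I_ideal : twosided_ideal I.

Lemma idealMl a x : x \in I -> a * x \in I.
Proof. by case: I_ideal => _ _ IM xI; rewrite -[a * x]mulr1; apply: IM. Qed.

Lemma idealMr a x : x \in I -> x * a \in I.
Proof. by case: I_ideal => _ _ IM xI; rewrite -[x]mul1r; apply: IM. Qed.

Lemma idealZ (k : K) x : x \in I -> k *: x \in I.
Proof. by rewrite -mulr_algl; apply: idealMl. Qed.

Lemma ideal_commutator_twist (c : K) a x : x \in I -> a * x - c *: (x * a) \in I.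
Proof.
case: I_ideal => _ ID _ xI; rewrite -scaleN1r scalerA.
by apply: ID; [apply: idealMl | apply/idealZ/idealMr].
Qed.

Variables (r : K) (h : A).

Lemma twisted_sum_eliminate (S : seq int) (xc : int -> A) j : j \in S ->
  (forall k, k \in S -> twisted h r k (xc k)) -> \sum_(k <- S) xc k \in I ->
  \sum_(k <- rem j S) (r ^ k - r ^ j) *: (xc k * h) \in I.
Proof.
move=> jS twS xI.
have -> : \sum_(k <- rem j S) (r ^ k - r ^ j) *: (xc k * h)
        = h * \sum_(k <- S) xc k - r ^ j *: ((\sum_(k <- S) xc k) * h).
  rewrite [in RHS](perm_big _ (perm_to_rem jS)) /= big_cons.
  rewrite mulrDr mulrDl scalerDr opprD addrACA twS // subrr add0r.
  rewrite mulr_sumr mulr_suml scaler_sumr -sumrB big_seq [RHS]big_seq.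
  by apply: eq_bigr => k /mem_rem kS; rewrite twS // scalerBl.
exact: ideal_commutator_twist.
Qed.

Hypotheses (r_neq0 : r != 0) (r_nonroot : forall n : nat, (0 < n)%N -> r ^+ n != 1).

Lemma twisted_component_in_ideal n (S : seq int) (xc : int -> A) :
  size S = n.+1 -> uniq S -> (forall k, k \in S -> twisted h r k (xc k)) ->
  \sum_(k <- S) xc k \in I -> forall i, i \in S -> xc i * h ^+ n \in I.
Proof.
elim: n S xc => [|n IH] S xc sizeS uS twS xI i iS.
  case: S sizeS uS twS xI iS => [|k [|]] //= _ _ _.
  by rewrite big_seq1 inE expr0 mulr1 => xI /eqP ->.
have [j ji jS] : exists2 j, j != i & j \in S.
  case E: (rem i S) => [|j t]; first by move: (size_rem iS); rewrite E sizeS.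
  have : j \in rem i S by rewrite E mem_head.
  by rewrite mem_rem_uniq // inE => /andP[]; exists j.
have iS' : i \in rem j S by rewrite mem_rem_uniq // inE iS andbT eq_sym.
have rij_neq0 : r ^ i - r ^ j != 0.
  by rewrite subr_eq0; apply: contra ji => /eqP/expfz_inj-> //.
pose y k := (r ^ k - r ^ j) *: (xc k * h).
have twy k : k \in rem j S -> twisted h r k (y k).
  by move/mem_rem => kS; apply/twistedZ/twistedMh/twS.
have sizeS' : size (rem j S) = n.+1 by rewrite size_rem // sizeS.
have := IH _ y sizeS' (rem_uniq j uS) twy (twisted_sum_eliminate jS twS xI) i iS'.
rewrite /y -scalerAl -mulrA -exprS => /(idealZ (r ^ i - r ^ j)^-1).
by rewrite scalerA mulVf // scale1r.
Qed.

End TwistedIdeal.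

Theorem mainTheorem9 (K : fieldType) (phi : {poly K}) (r s : K)
  (A : algType K) (u d h : A) :
  r != 0 -> s != 0 ->
  is_down_up_algebra phi r s u d h ->
  (forall n : nat, (0 < n)%N -> r ^+ n != 1) ->
  forall (I : {pred A}), twosided_ideal I ->
  forall (x : A) (xc : int -> A) (S : seq int),
    x \in I ->
    uniq S ->
    (forall i, i \in S -> xc i != 0) ->
    (forall i, i \notin S -> xc i = 0) ->
    (forall i, homog u d h i (xc i)) ->
    x = \sum_(i <- S) xc i ->
    (1 <= size S)%N ->
    forall i : int, xc i * h ^+ (size S).-1 \in I.
Proof.
move=> r0 _ [[hu dh _] _] r_nonroot I I_ideal x xc S xI uS _ xc_out hom xE sizeS i.
have [iS|iS] := boolP (i \in S); last by rewrite xc_out // mul0r; case: I_ideal.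
have twS k : k \in S -> twisted h r k (xc k).
  by move=> _; exact: (homog_twisted r0 hu dh (hom k)).
rewrite xE in xI.
exact: (twisted_component_in_ideal I_ideal r0 r_nonroot (esym (prednK sizeS)) uS twS xI iS).
Qed.
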